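(* For any integers $n\ge4$ and $k<\frac{n-1}{2}$, the Cayley graph of $\mathbb{Z}_n$ with generators $\{\pm1,\dots,\pm k\}$ (i.e. the graph on $\{0,\dots,n-1\}$ where $i,j$ are adjacent iff $j-i\equiv\pm g\pmod n$ for some $g\in\{1,\dots,k\}$) has broadcast rate $\beta=n/(k+1)$.
   Context: For an undirected graph $G$ on vertex set $V$, consider the index coding problem: a server holds messages $x_v\in\Sigma$ ($|\Sigma|>1$), receiver $v$ wants $x_v$ and knows $x_u$ for every neighbor $u$ of $v$. A solution is an encoding $\mathcal{E}:\Sigma^{V}\to\Sigma_P$ from which each receiver can recover its message given its side information, for all message values. $\beta_t(G)$ is the minimum of $\lceil\log_2|\Sigma_P|\rceil$ over solutions with $|\Sigma|=2^t$, and the broadcast rate is $\beta(G)=\lim_t\beta_t(G)/t=\inf_t\beta_t(G)/t$. *)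

From mathcomp Require Import all_boot all_order all_algebra.
From mathcomp Require Import boolp classical_sets reals.
Set Implicit Arguments. Unset Strict Implicit. Unset Printing Implicit Defensive.
Import Order.TTheory GRing.Theory Num.Theory.

Definition alph (t : nat) := 'I_(2 ^ t).

(* An index coding solution for the undirected graph with adjacency relation
   e on V: an encoding E : Sigma^V -> P such that every receiver v can recover
   x_v from E x and its side information (x_u for neighbours u of v), i.e.
   there is a decoder D v depending on x only through (x_u)_{u ~ v}. *)
Definition is_ic_solution (V : finType) (e : rel V) (t : nat) (P : finType)
    (E : (V -> alph t) -> P) : Prop :=
  exists D : V -> P -> (V -> alph t) -> alph t,
    (forall v p (x y : V -> alph t),
        (forall u, e v u -> x u = y u) -> D v p x = D v p y) /\
    (forall (x : V -> alph t) v, D v (E x) x = x v).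

(* ell is achievable: some solution with ceil(log2 |Sigma_P|) = ell
   (up_log 2 m = ceil(log2 m) for m >= 1). *)
Definition ic_achievable (V : finType) (e : rel V) (t ell : nat) : Prop :=
  exists (P : finType) (E : (V -> alph t) -> P),
    is_ic_solution e E /\ up_log 2 #|P| = ell.

Lemma ic_achievable_ex (V : finType) (e : rel V) (t : nat) :
  exists ell, `[< ic_achievable e t ell >].
Proof.
exists (up_log 2 #|{ffun V -> alph t}|); apply/asboolP.
exists {ffun V -> alph t}, (fun x => finfun x); split => //.
exists (fun v (p : {ffun V -> alph t}) _ => p v); split => // x v.
by rewrite ffunE.
Qed.

Definition beta_t (V : finType) (e : rel V) (t : nat) : nat :=
  ex_minn (ic_achievable_ex e t).

Definition broadcast_rate (R : realType) (V : finType) (e : rel V) : R :=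
  inf [set ((beta_t e t)%:R / t%:R)%R | t in [set t : nat | (0 < t)%N]].

Definition circ_adj (n k : nat) : rel 'I_n :=
  fun i j => [exists g : 'I_k.+1, (0 < g)%N &&
     ((j + g == i %[mod n]) || (i + g == j %[mod n]))].
Arguments circ_adj : clear implicits.

(* Upper bound: with k + 1 bits per message, broadcasting at each position r
   the XOR of bit j of x_(r + j), j = 0..k, lets receiver v read each bit of
   x_v, so beta_(k+1) <= n.
   Lower bound: the messages sharing one codeword form a set X of words in
   which each coordinate is determined by its neighbours. Let H(S) be the
   entropy of the restriction to S of a uniform word of X and E(L) the sum of
   H over the n cyclic intervals of length L. Submodularity of H makes E
   concave; as the point r + k of an interval [r, r + b + k] with b >= k is
   determined by the rest, E(b + k + 1) <= E(k) + E(b); similarly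
   E(n) = E(n - 1). These force (k + 1) E(n) <= n E(k), i.e.
   |X|^(k+1) <= |Sigma|^(nk). Some codeword has |X| >= |Sigma|^n / |Sigma_P|,
   whence |Sigma_P|^(k+1) >= |Sigma|^n and beta_t >= t n / (k + 1). *)

From mathcomp Require Import all_boot all_order all_algebra.
From mathcomp Require Import boolp classical_sets reals exp Rstruct.
From mathcomp Require Import ring lra zify.
Import Order.TTheory GRing.Theory Num.Theory.
Import fintype finset.
Set Implicit Arguments. Unset Strict Implicit. Unset Printing Implicit Defensive.

Section Entropy.
Local Open Scope ring_scope.
Variables (R : realType) (V A : finType) (X : {set {ffun V -> A}}).
Implicit Types (S T : {set V}) (x y z : {ffun V -> A}).

Definition agree_on S x y := [forall v in S, x v == y v].

Lemma agree_onC S x y : agree_on S x y = agree_on S y x.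
Proof. by apply/forall_inP/forall_inP => xy v Sv; rewrite eq_sym xy. Qed.

Lemma agree_on_refl S x : agree_on S x x.
Proof. exact/forall_inP. Qed.

Lemma agree_on_trans S y x z : agree_on S x y -> agree_on S y z -> agree_on S x z.
Proof.
move=> /forall_inP xy /forall_inP yz; apply/forall_inP => v Sv.
by rewrite (eqP (xy v Sv)) yz.
Qed.

Lemma agree_onS S T x y : S \subset T -> agree_on T x y -> agree_on S x y.
Proof.
by move=> /subsetP sST /forall_inP xy; apply/forall_inP => v /sST; apply: xy.
Qed.

Lemma agree_onU S T x y : agree_on (S :|: T) x y = agree_on S x y && agree_on T x y.
Proof.
apply/idP/andP => [xy|[/forall_inP xyS /forall_inP xyT]].
  by split; apply: agree_onS xy; [apply: finset.subsetUl | apply: finset.subsetUr].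
by apply/forall_inP => v; rewrite inE => /orP[/xyS|/xyT].
Qed.

Lemma agree_on1 v x y : agree_on [set v] x y = (x v == y v).
Proof.
apply/forall_inP/eqP => [xy|xy u]; first by apply/eqP/xy; rewrite inE.
by rewrite inE => /eqP ->; apply/eqP.
Qed.

Lemma agree_on0 x y : agree_on finset.set0 x y.
Proof. by apply/forall_inP => v; rewrite inE. Qed.

Lemma agree_onT x y : agree_on [set: V] x y = (x == y).
Proof.
apply/forall_inP/eqP => [xy|-> v _ //]; apply/ffunP => v.
by apply/eqP/xy; rewrite inE.
Qed.

Definition class_size S x : R := #|[set y in X | agree_on S y x]|%:R.

Lemma class_size_agree S x y : agree_on S x y -> class_size S x = class_size S y.
Proof.
move=> xy; congr (_%:R); apply: eq_card => z; rewrite !inE.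
case: (z \in X) => //=; apply/idP/idP => [zx|zy]; first exact: agree_on_trans xy.
by apply: agree_on_trans zy _; rewrite agree_onC.
Qed.

Lemma class_size_gt0 S x : x \in X -> 0 < class_size S x.
Proof.
move=> Xx; rewrite ltr0n card_gt0; apply/set0Pn; exists x.
by rewrite inE Xx agree_on_refl.
Qed.

Lemma class_sizeE S x : class_size S x = \sum_(y in X) (agree_on S y x)%:R.
Proof.
rewrite /class_size -sum1_card natr_sum big_mkcond [RHS]big_mkcond /=.
by apply: eq_bigr => y _; rewrite !inE; case: (y \in X); case: agree_on.
Qed.

Lemma class_sizeM S T x : class_size S x * class_size T x =
  \sum_(y in X) \sum_(z in X) (agree_on S y x && agree_on T z x)%:R.
Proof.
rewrite !class_sizeE big_distrl; apply: eq_bigr => y _.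
rewrite big_distrr; apply: eq_bigr => z _.
by rewrite /= -natrM mulnb.
Qed.

Lemma sum_agree_on_class_size S x0 : x0 \in X ->
  \sum_(x in X) (agree_on S x x0)%:R / class_size S x = 1.
Proof.
move=> Xx0; rewrite (eq_bigr (fun x => (agree_on S x x0)%:R / class_size S x0)).
  by rewrite -mulr_suml -class_sizeE divff // gt_eqF // class_size_gt0.
move=> x _; case xx0: (agree_on S x x0); last by rewrite !mul0r.
by rewrite (class_size_agree xx0).
Qed.

(* The double counting behind submodularity: the weight of the pairs [(y, z)]
   is concentrated on the classes of [S :&: T], where [y] and [z] must agree. *)
Lemma sum_pair_weight_le S T y z : y \in X -> z \in X ->
  \sum_(x in X) (agree_on S y x && agree_on T z x)%:R /
     (class_size (S :|: T) x * class_size (S :&: T) x)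
  <= (agree_on (S :&: T) z y)%:R / class_size (S :&: T) y.
Proof.
move=> Xy Xz.
case: (pickP [pred x | [&& x \in X, agree_on S y x & agree_on T z x]]);
    last first.
  move=> none; rewrite big1 ?divr_ge0 ?ler0n ?ltW ?class_size_gt0 // => x Xx.
  by have := none x; rewrite /= Xx /= => ->; rewrite mul0r.
move=> x0 /and3P[Xx0 yx0 zx0].
have zy : agree_on (S :&: T) z y.
  apply: agree_on_trans (_ : agree_on _ x0 y).
    by apply: agree_onS zx0; apply: finset.subsetIr.
  by apply: agree_onS (finset.subsetIl S T) _; rewrite agree_onC.
rewrite zy (eq_bigr (fun x => (agree_on (S :|: T) x x0)%:R /
    class_size (S :|: T) x / class_size (S :&: T) y)).
  by rewrite -mulr_suml sum_agree_on_class_size // mul1r.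
move=> x _; case: (boolP (agree_on S y x && agree_on T z x)) => [/andP[yx zx]|not_yzx].
  have -> : agree_on (S :|: T) x x0.
    rewrite agree_onU; apply/andP; split.
      by apply: agree_on_trans yx0; rewrite agree_onC.
    by apply: agree_on_trans zx0; rewrite agree_onC.
  rewrite (@class_size_agree (S :&: T) x y) ?invfM ?mulrA //.
  by apply: agree_onS (finset.subsetIl S T) _; rewrite agree_onC.
suff -> : agree_on (S :|: T) x x0 = false by rewrite !mul0r.
apply: contraNF not_yzx; rewrite agree_onU => /andP[xx0S xx0T].
by rewrite (agree_on_trans yx0) ?(agree_on_trans zx0) // agree_onC.
Qed.

Lemma sum_class_size_ratio_le S T :
  \sum_(x in X) class_size S x * class_size T x /
     (class_size (S :|: T) x * class_size (S :&: T) x) <= #|X|%:R.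
Proof.
under eq_bigr => x _ do rewrite class_sizeM mulr_suml.
under eq_bigr => x _ do under eq_bigr => y _ do rewrite mulr_suml.
rewrite exchange_big /=; under eq_bigr => y _ do rewrite exchange_big /=.
apply: le_trans (_ : \sum_(y in X) \sum_(z in X)
   (agree_on (S :&: T) z y)%:R / class_size (S :&: T) y <= _).
  by apply: ler_sum => y Xy; apply: ler_sum => z Xz; apply: sum_pair_weight_le.
rewrite -sumr_const; apply: ler_sum => y Xy.
by rewrite -mulr_suml -class_sizeE divff // gt_eqF // class_size_gt0.
Qed.

Lemma ln_le_subr1 (r : R) : 0 < r -> ln r <= r - 1.
Proof.
by move=> r_gt0; have := @le_ln1Dx R (r - 1); rewrite addrCA subrr addr0; apply; lra.
Qed.

(* [entropy S] is [#|X|] times the Shannon entropy (in nats) of the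
   restriction to [S] of a uniformly distributed word of [X]. *)
Definition entropy S : R :=
  #|X|%:R * ln #|X|%:R - \sum_(x in X) ln (class_size S x).

Lemma entropy_submod S T :
  entropy (S :|: T) + entropy (S :&: T) <= entropy S + entropy T.
Proof.
pose ratio x := class_size S x * class_size T x /
  (class_size (S :|: T) x * class_size (S :&: T) x).
have ln_ratio x : x \in X -> ln (ratio x) = ln (class_size S x) +
    ln (class_size T x) - ln (class_size (S :|: T) x) - ln (class_size (S :&: T) x).
  move=> Xx; have c_gt0 U : class_size U x \in Num.pos.
    by rewrite posrE class_size_gt0.
  by rewrite ln_div ?lnM ?posrE ?mulr_gt0 -?posrE // opprD addrA.
have : \sum_(x in X) ln (ratio x) <= \sum_(x in X) (ratio x - 1).
  apply: ler_sum => x Xx; apply: ln_le_subr1.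
  by rewrite divr_gt0 ?mulr_gt0 ?class_size_gt0.
have := sum_class_size_ratio_le S T.
rewrite (eq_bigr _ ln_ratio) /entropy !big_split /= !sumrN sumr_const -/(ratio _).
lra.
Qed.

Lemma entropy_set0 : entropy finset.set0 = 0.
Proof.
rewrite /entropy (eq_bigr (fun=> ln #|X|%:R)).
  by rewrite sumr_const -[ln _ *+ _]mulr_natl subrr.
move=> x _; congr (ln _%:R); apply: eq_card => y.
by rewrite !inE agree_on0 andbT.
Qed.

Lemma entropy_setT : entropy [set: V] = #|X|%:R * ln #|X|%:R.
Proof.
rewrite /entropy big1 ?subr0 // => x Xx.
rewrite /class_size (_ : [set y in X | _] = [set x]) ?cards1 ?ln1 //.
by apply/setP => y; rewrite !inE agree_onT andb_idl // => /eqP->.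
Qed.

Lemma entropy_ge0 S : 0 <= entropy S.
Proof.
rewrite subr_ge0 [_%:R * _]mulr_natl -sumr_const; apply: ler_sum => x Xx.
have X_gt0 : 0 < #|X|%:R :> R by rewrite ltr0n card_gt0; apply/set0Pn; exists x.
rewrite ler_ln ?posrE ?class_size_gt0 // ler_nat subset_leq_card //.
by apply/subsetP => y; rewrite inE => /andP[].
Qed.

Lemma entropy_subadd S T : entropy (S :|: T) <= entropy S + entropy T.
Proof. by have := entropy_submod S T; have := entropy_ge0 (S :&: T); lra. Qed.

Lemma entropy_setU_determined S T :
    {in X &, forall x y, agree_on S x y -> agree_on T x y} ->
  entropy (S :|: T) = entropy S.
Proof.
move=> detST; congr (_ - _); apply: eq_bigr => x Xx; congr (ln _%:R).
apply: eq_card => y; rewrite !inE agree_onU.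
by case: (boolP (y \in X)) => //= Xy; apply: andb_idr; apply: detST.
Qed.

Lemma sum_inv_class_size1_le v : \sum_(x in X) (class_size [set v] x)^-1 <= #|A|%:R.
Proof.
have split_value x : (class_size [set v] x)^-1 =
    \sum_(a : A) (x v == a)%:R / class_size [set v] x.
  rewrite -mulr_suml (bigD1 (x v)) //= eqxx big1 ?addr0 ?mul1r // => a.
  by rewrite eq_sym => /negbTE ->.
rewrite (eq_bigr _ (fun x _ => split_value x)) exchange_big /= -sumr_const.
apply: ler_sum => a _.
case: (pickP [pred x | (x \in X) && (x v == a)]) => [x0 /andP[Xx0 /eqP x0v]|none].
  rewrite -[X in _ <= X](sum_agree_on_class_size [set v] Xx0) le_eqVlt.
  by apply/orP; left; apply/eqP/eq_bigr => x _; rewrite agree_on1 x0v.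
rewrite big1 // => x Xx; have := none x; rewrite /= Xx /= => ->.
by rewrite mul0r.
Qed.

Lemma entropy_set1_le v : entropy [set v] <= #|X|%:R * ln #|A|%:R.
Proof.
have [X0|[x0 Xx0]] := set_0Vmem X.
  by rewrite /entropy X0 cards0 !mul0r big_pred0 ?subr0 // => x; rewrite inE.
set N : R := #|X|%:R; set q : R := #|A|%:R.
have N_gt0 : 0 < N by rewrite ltr0n card_gt0; apply/set0Pn; exists x0.
have q_gt0 : 0 < q by rewrite ltr0n; apply/card_gt0P; exists (x0 v).
have term_le x : x \in X -> ln N - ln q - ln (class_size [set v] x)
    <= N / q * (class_size [set v] x)^-1 - 1.
  move=> Xx; have c_gt0 := class_size_gt0 [set v] Xx.
  by rewrite -!ln_div ?posrE ?divr_gt0 //; apply: ln_le_subr1; rewrite !divr_gt0.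
have : \sum_(x in X) (ln N - ln q - ln (class_size [set v] x))
    <= \sum_(x in X) (N / q * (class_size [set v] x)^-1 - 1) by apply: ler_sum.
rewrite !big_split /= -mulr_sumr !sumrN !sumr_const.
have := ler_wpM2l (ltW (divr_gt0 N_gt0 q_gt0)) (sum_inv_class_size1_le v).
rewrite mulfVK ?gt_eqF // /entropy -/N -[ln N *+ _]mulr_natl -[ln q *+ _]mulr_natl.
lra.
Qed.

End Entropy.

Section CyclicArcs.
Variables (n : nat) (n_gt0 : 0 < n).
Implicit Types (r i : 'I_n).

Definition shift r (a : nat) : 'I_n := Ordinal (ltn_pmod (r + a) n_gt0).

Definition offset r i : nat := (i + (n - r)) %% n.

Definition arc r (L : nat) : {set 'I_n} := [set i | offset r i < L].

Lemma offset_lt r i : offset r i < n.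
Proof. exact: ltn_pmod. Qed.

Lemma offsetK r i : (r + offset r i) %% n = i.
Proof.
rewrite /offset modnDmr.
have -> : r + (i + (n - r)) = i + n by have := ltn_ord r; lia.
by rewrite modnDr modn_small.
Qed.

Lemma offset_eq r i m : m < n -> (r + m) %% n = i -> offset r i = m.
Proof.
move=> lt_mn def_i; have := offsetK r i; rewrite -def_i => /eqP.
by rewrite eqn_modDl !modn_small ?offset_lt // => /eqP.
Qed.

Lemma offset_shift r a : offset r (shift r a) = a %% n.
Proof. by apply: offset_eq; rewrite ?ltn_pmod //= modnDmr. Qed.

Lemma offset_shift_origin r a i : offset r i = (offset (shift r a) i + a) %% n.
Proof.
apply: offset_eq; first exact: ltn_pmod.
rewrite modnDmr -[in RHS](offsetK (shift r a) i) /= modnDml.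
by congr (_ %% n); lia.
Qed.

Lemma eq_shift r a i : a < n -> (i == shift r a) = (offset r i == a).
Proof.
move=> lt_an; apply/eqP/eqP => [->|off_i]; first by rewrite offset_shift modn_small.
by apply: val_inj; rewrite /= -off_i offsetK.
Qed.

Lemma shift_inj a : injective (shift^~ a).
Proof.
move=> r r' /(congr1 val) /= /eqP; rewrite eqn_modDr !modn_small // => /eqP.
exact: val_inj.
Qed.

Lemma offset_shift1 r i : offset r i =
  if (offset (shift r 1) i).+1 == n then 0 else (offset (shift r 1) i).+1.
Proof.
rewrite (offset_shift_origin r 1 i) addn1.
case: eqP => [->|ne]; first by rewrite modnn.
by rewrite modn_small //; have := offset_lt (shift r 1) i; lia.
Qed.

Lemma arc0 r : arc r 0 = finset.set0.
Proof. by apply/setP => i; rewrite !inE. Qed.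

Lemma arc_full r : arc r n = [set: 'I_n].
Proof. by apply/setP => i; rewrite !inE offset_lt. Qed.

Lemma arcS r L : L < n -> arc r L.+1 = arc r L :|: [set shift r L].
Proof. by move=> lt_Ln; apply/setP => i; rewrite !inE eq_shift //; lia. Qed.

Lemma arcS_shift1 r L : 0 < L < n -> arc r L.+1 = arc r L :|: arc (shift r 1) L.
Proof.
move=> L_bd; apply/setP => i; rewrite !inE offset_shift1.
by have := offset_lt (shift r 1) i; case: eqP; lia.
Qed.

Lemma arcI_shift1 r L : 0 < L < n ->
  arc r L :&: arc (shift r 1) L = arc (shift r 1) L.-1.
Proof.
move=> L_bd; apply/setP => i; rewrite !inE offset_shift1.
by have := offset_lt (shift r 1) i; case: eqP; lia.
Qed.

Lemma arc_hole k b r : b + k.+1 <= n ->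
  arc r (b + k.+1) = (arc r k :|: arc (shift r k.+1) b) :|: [set shift r k].
Proof.
move=> le_n; apply/setP => i; rewrite !inE eq_shift; last lia.
rewrite (offset_shift_origin r k.+1 i).
have := offset_lt (shift r k.+1) i; set m := offset _ i => lt_mn.
case: (ltnP (m + k.+1) n) => [lt_n|ge_n]; first by rewrite modn_small //; lia.
have -> : m + k.+1 = (m + k.+1 - n) + n by lia.
by rewrite modnDr modn_small; lia.
Qed.

Lemma circ_adj_diff k v u : circ_adj n k v u ->
  exists g, [/\ 0 < g, g <= k & ((u + g) %% n = v \/ (v + g) %% n = u)].
Proof.
case/existsP => g /andP[g_gt0 /orP[/eqP e|/eqP e]]; exists g;
  split => //; try by have := ltn_ord g; lia.
  by left; rewrite e modn_small.
by right; rewrite e modn_small.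
Qed.

Lemma circ_adj_arc_hole k b r u : k < n -> k <= b ->
  circ_adj n k (shift r k) u -> u \in arc r k :|: arc (shift r k.+1) b.
Proof.
move=> lt_kn le_kb /circ_adj_diff[g [g_gt0 le_gk [e|e]]]; rewrite !inE.
  have -> : offset r u = k - g; last by rewrite ltn_subrL g_gt0 /=; lia.
  apply: offset_eq; first lia.
  apply/eqP; rewrite -(modn_small (ltn_ord u)) -(eqn_modDr g) e /=.
  by rewrite -addnA subnK.
have -> : offset (shift r k.+1) u = g.-1; last by apply/orP; right; lia.
apply: offset_eq; first lia.
by rewrite -e /= !modnDml; congr (_ %% n); lia.
Qed.

Lemma circ_adj_arc_last k r u : k < n ->
  circ_adj n k (shift r n.-1) u -> u \in arc r n.-1.
Proof.
move=> lt_kn adj_u; rewrite inE.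
have : u != shift r n.-1.
  apply/eqP => def_u; move/circ_adj_diff: adj_u => [g [g_gt0 le_gk e]].
  rewrite def_u in e.
  have : (shift r n.-1 + g) %% n = (shift r n.-1 + 0) %% n.
    by rewrite addn0 (modn_small (ltn_ord _)); case: e.
  by move/eqP; rewrite eqn_modDl mod0n modn_small; lia.
by rewrite eq_shift; [have := offset_lt r u; lia | lia].
Qed.

End CyclicArcs.

Section ConcaveSequence.
Local Open Scope ring_scope.
Variables (R : realFieldType) (E : nat -> R) (n : nat).
Hypothesis E_concave : forall L, (0 < L < n)%N -> E L.+1 + E L.-1 <= 2 * E L.

Lemma concave_increment_le i d : (0 < i)%N -> (i + d <= n)%N ->
  E (i + d) - E (i + d).-1 <= E i - E i.-1.
Proof.
move=> i_gt0; elim: d => [|d IHd] le_n; first by rewrite addn0.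
have := E_concave (L := i + d) ltac:(lia); have := IHd ltac:(lia).
by rewrite addnS /=; lra.
Qed.

Lemma concave_increment_mul L j : (L <= n)%N -> (j < L)%N ->
  j%:R * (E L - E L.-1) <= E L - E (L - j).
Proof.
move=> le_Ln; elim: j => [|j IHj] lt_jL; first by rewrite mul0r subn0 subrr.
have := concave_increment_le (i := L - j) (d := j) ltac:(lia) ltac:(lia).
have := IHj ltac:(lia).
have -> : (L - j + j = L)%N by lia.
have -> : (L - j).-1 = (L - j.+1)%N by lia.
rewrite -natr1 mulrDl mul1r; lra.
Qed.

Variable k : nat.
Hypothesis E_hole :
  forall b, (k <= b)%N -> (b + k.+1 <= n)%N -> E (b + k.+1) <= E k + E b.

Lemma hole_iter_le j : (k + j * k.+1 <= n)%N -> E (k + j * k.+1) <= j.+1%:R * E k.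
Proof.
elim: j => [|j IHj] le_n; first by rewrite mul0n addn0 mul1r.
rewrite mulSn [(k.+1 + _)%N]addnC addnA -natr1 mulrDl mul1r.
have := E_hole (b := k + j * k.+1) ltac:(lia) ltac:(lia).
have := IHj ltac:(lia); lra.
Qed.

(* Past [2k + 1], concavity and the hole inequality bound each increment by
   [E k / (k + 1)]. *)
Lemma concave_tail_le a s : (k.*2.+1 <= a)%N -> (a + s <= n)%N ->
  k.+1%:R * E (a + s) <= k.+1%:R * E a + s%:R * E k.
Proof.
move=> le_a; elim: s => [|s IHs] le_n; first by rewrite addn0 mul0r addr0.
have := concave_increment_mul (L := a + s.+1) (j := k.+1) ltac:(lia) ltac:(lia).
have := E_hole (b := a + s.+1 - k.+1) ltac:(lia) ltac:(lia).
have -> : (a + s.+1 - k.+1 + k.+1 = a + s.+1)%N by lia.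
have -> : (a + s.+1).-1 = (a + s)%N by lia.
rewrite -natr1 mulrDl mul1r; have := IHs ltac:(lia); lra.
Qed.

Lemma concave_hole_bound : (k.*2.+2 <= n)%N -> E n = E n.-1 ->
  k.+1%:R * E n <= n%:R * E k.
Proof.
move=> le_n E_last.
pose m := ((n.-1 - k) %/ k.+1)%N; pose s := ((n.-1 - k) %% k.+1)%N.
have def_n1 : (n.-1 = k + m * k.+1 + s)%N by rewrite -addnA -divn_eq; lia.
have m_gt0 : (0 < m)%N by rewrite divn_gt0 //; lia.
have := hole_iter_le (j := m) ltac:(lia).
have := concave_tail_le (a := k + m * k.+1) (s := s) ltac:(nia) ltac:(lia).
rewrite E_last def_n1.
have -> : n = (m.+1 * k.+1 + s)%N by rewrite mulSn; lia.
rewrite natrD natrM => tail_le /(ler_wpM2l (ler0n R k.+1)); lra.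
Qed.

End ConcaveSequence.

Section ArcEntropy.
Local Open Scope ring_scope.
Variables (R : realType) (A : finType) (n k : nat) (n_gt0 : (0 < n)%N).
Variable X : {set {ffun 'I_n -> A}}.
Hypothesis X_decodable :
  {in X &, forall (x y : {ffun 'I_n -> A}) v,
    (forall u, circ_adj n k v u -> x u = y u) -> x v = y v}.

Local Notation H := (@entropy R _ _ X).
Local Notation shift := (shift n_gt0).

Lemma entropy_setU1_nbr (S : {set 'I_n}) v :
  (forall u, circ_adj n k v u -> u \in S) -> H (S :|: [set v]) = H S.
Proof.
move=> nbr_S; apply: entropy_setU_determined => x y Xx Xy xy; rewrite agree_on1.
by apply/eqP/X_decodable => // u /nbr_S /(forall_inP xy) /eqP.
Qed.

Definition arc_entropy L := \sum_(r : 'I_n) H (arc r L).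

Lemma arc_entropy_shift a L : \sum_(r : 'I_n) H (arc (shift r a) L) = arc_entropy L.
Proof. by rewrite /arc_entropy [RHS](reindex_inj (@shift_inj _ n_gt0 a)). Qed.

Lemma arc_entropy_concave L : (0 < L < n)%N ->
  arc_entropy L.+1 + arc_entropy L.-1 <= 2 * arc_entropy L.
Proof.
move=> L_bd; rewrite -(arc_entropy_shift 1 L.-1) mulr2n mulrDl mul1r.
rewrite -{2}(arc_entropy_shift 1 L) /arc_entropy -!big_split /=.
apply: ler_sum => r _.
by rewrite (arcS_shift1 n_gt0 r L_bd) -(arcI_shift1 n_gt0 r L_bd) entropy_submod.
Qed.

Lemma arc_entropy_hole b : (k <= b)%N -> (b + k.+1 <= n)%N ->
  arc_entropy (b + k.+1) <= arc_entropy k + arc_entropy b.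
Proof.
move=> le_kb le_n; rewrite -(arc_entropy_shift k.+1 b) /arc_entropy -big_split /=.
apply: ler_sum => r _; rewrite (arc_hole n_gt0 r le_n) entropy_setU1_nbr.
  exact: entropy_subadd.
by move=> u; apply: circ_adj_arc_hole => //; lia.
Qed.

Lemma entropy_arc_le r L : (L <= n)%N ->
  H (arc r L) <= L%:R * (#|X|%:R * ln #|A|%:R).
Proof.
elim: L => [|L IHL] le_n; first by rewrite arc0 entropy_set0 mul0r.
rewrite (arcS n_gt0 r le_n) -natr1 mulrDl mul1r.
apply: le_trans (entropy_subadd R X _ _) _.
by rewrite lerD ?IHL ?entropy_set1_le //; lia.
Qed.

Lemma arc_entropy_le L : (L <= n)%N ->
  arc_entropy L <= n%:R * (L%:R * (#|X|%:R * ln #|A|%:R)).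
Proof.
move=> le_n; rewrite [n%:R * _]mulr_natl -[n in _ *+ n]card_ord -sumr_const.
by apply: ler_sum => r _; apply: entropy_arc_le.
Qed.

Lemma arc_entropy_last : (k < n)%N -> arc_entropy n = arc_entropy n.-1.
Proof.
move=> lt_kn; apply: eq_bigr => r _.
have lt_pn : (n.-1 < n)%N by rewrite ltn_predL.
have := arcS n_gt0 r lt_pn; rewrite prednK // => ->.
by apply: entropy_setU1_nbr => u; apply: circ_adj_arc_last.
Qed.

Lemma arc_entropy_full : arc_entropy n = n%:R * (#|X|%:R * ln #|X|%:R).
Proof.
rewrite [n%:R * _]mulr_natl -[n in _ *+ n]card_ord -sumr_const.
by apply: eq_bigr => r _; rewrite (arc_full n_gt0) entropy_setT.
Qed.

Lemma decodable_card_le : (k.*2.+2 <= n)%N -> (#|X| ^ k.+1 <= #|A| ^ (n * k))%N.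
Proof.
move=> le_n; have lt_kn : (k < n)%N by lia.
have [X0|[x0 Xx0]] := set_0Vmem X; first by rewrite X0 cards0 exp0n.
set N : R := #|X|%:R; set q : R := #|A|%:R.
have N_gt0 : 0 < N by rewrite ltr0n card_gt0; apply/set0Pn; exists x0.
have q_gt0 : 0 < q by rewrite ltr0n; apply/card_gt0P; exists (x0 (Ordinal n_gt0)).
have E_bound := concave_hole_bound arc_entropy_concave arc_entropy_hole le_n
  (arc_entropy_last lt_kn).
have := le_trans E_bound (ler_wpM2l (ler0n R n) (arc_entropy_le (ltnW lt_kn))).
rewrite arc_entropy_full.
have -> : k.+1%:R * (n%:R * (N * ln N)) = n%:R * N * (k.+1%:R * ln N) by ring.
have -> : n%:R * (n%:R * (k%:R * (N * ln q))) = n%:R * N * ((n * k)%:R * ln q).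
  by rewrite natrM; ring.
rewrite ler_pM2l => [ln_le|]; last by rewrite mulr_gt0 // ltr0n.
rewrite -(ler_nat R) !natrX -ler_ln ?posrE ?exprn_gt0 // !lnXn //.
by rewrite -[ln N *+ _]mulr_natl -[ln q *+ _]mulr_natl.
Qed.

End ArcEntropy.

Section XorCode.
Variables (n k : nat) (n_gt0 : 0 < n) (lt_kn : k < n).
Local Notation shift := (shift n_gt0).
Local Notation bits := {ffun 'I_k.+1 -> bool}.

Let card_bits : #|alph k.+1| = #|bits|.
Proof. by rewrite card_ffun card_bool !card_ord. Qed.

Let to_bits (a : alph k.+1) : bits := enum_val (cast_ord card_bits (enum_rank a)).
Let of_bits (b : bits) : alph k.+1 := enum_val (cast_ord (esym card_bits) (enum_rank b)).
Let to_bitsK : cancel to_bits of_bits.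
Proof. by move=> a; rewrite /to_bits /of_bits enum_valK cast_ordK enum_rankK. Qed.

(* Bit [j] of the message of [v] enters the broadcast bit at [v - j] only,
   together with bits of the messages of [v - j + j'] for [j' <> j], all
   neighbours of [v]. *)
Definition xor_encode (x : 'I_n -> alph k.+1) : {ffun 'I_n -> bool} :=
  [ffun r => \big[addb/false]_(j < k.+1) to_bits (x (shift r j)) j].

Definition xor_decode v (p : {ffun 'I_n -> bool}) (x : 'I_n -> alph k.+1) :=
  of_bits [ffun j : 'I_k.+1 => p (shift v (n - j)) (+)
    \big[addb/false]_(j' < k.+1 | j' != j) to_bits (x (shift (shift v (n - j)) j')) j'].

Lemma shift_subK v (j : 'I_k.+1) : shift (shift v (n - j)) j = v.
Proof.
apply: val_inj => /=; rewrite modnDml.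
have -> : v + (n - j) + j = v + n by have := ltn_ord j; lia.
by rewrite modnDr modn_small.
Qed.

Lemma circ_adj_shift_sub v (j j' : 'I_k.+1) : j' != j ->
  circ_adj n k v (shift (shift v (n - j)) j').
Proof.
move=> ne_j'j; apply/existsP; have := ltn_ord j; have := ltn_ord j'.
case: (ltnP j j') => [lt_jj'|le_j'j] lt_j' lt_j.
  have lt_g : j' - j < k.+1 by lia.
  exists (Ordinal lt_g); rewrite /= subn_gt0 lt_jj'; apply/orP; right.
  rewrite modnDml; apply/eqP; rewrite [in RHS]modn_mod.
  have -> : v + (n - j) + j' = v + (j' - j) + n by lia.
  by rewrite modnDr.
have lt_g : j - j' < k.+1 by lia.
have lt_j'j : j' < j by rewrite ltn_neqAle ne_j'j.
exists (Ordinal lt_g); rewrite /= subn_gt0 lt_j'j; apply/orP; left.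
rewrite modnDml -addnA modnDml.
have -> : v + (n - j) + (j' + (j - j')) = v + n by lia.
by rewrite modnDr.
Qed.

Lemma xor_code_achievable : ic_achievable (circ_adj n k) k.+1 n.
Proof.
exists {ffun 'I_n -> bool}, xor_encode; split; last first.
  by rewrite card_ffun card_bool card_ord up_expnK.
exists xor_decode; split.
  move=> v p x y xy; congr of_bits; apply/ffunP => j; rewrite !ffunE.
  congr (_ (+) _); apply: eq_bigr => j' ne_j'j.
  by rewrite xy //; apply: circ_adj_shift_sub.
move=> x v; rewrite /xor_decode -[RHS]to_bitsK; congr of_bits; apply/ffunP => j.
by rewrite !ffunE (bigD1 j) //= shift_subK -addbA addbb addbF.
Qed.

End XorCode.

Lemma exists_large_fibre (T P : finType) (f : T -> P) (x0 : T) :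
  exists p, #|T| <= #|P| * #|[set x | f x == p]|.
Proof.
have [p _ max_p] := @arg_maxnP P (f x0) xpredT (fun p => #|[set x | f x == p]|) isT.
exists p; have -> : #|T| = \sum_(q : P) #|[set x | f x == q]|.
  rewrite -sum1_card (partition_big f xpredT) //; apply: eq_bigr => q _.
  by rewrite -sum1_card; apply: eq_bigl => x; rewrite inE.
by rewrite -sum_nat_const; apply: leq_sum => q _; apply: max_p.
Qed.

Definition code_fibre (V : finType) t (P : finType) (E : (V -> alph t) -> P) (p : P) :
  {set {ffun V -> alph t}} := [set x : {ffun V -> alph t} | E x == p].

Lemma ic_solution_fibre_decodable (V : finType) (e : rel V) t (P : finType)
    (E : (V -> alph t) -> P) p : is_ic_solution e E ->
  {in code_fibre E p &, forall (x y : {ffun V -> alph t}) v,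
    (forall u, e v u -> x u = y u) -> x v = y v}.
Proof.
move=> [D [D_local D_decodes]] x y; rewrite !inE => /eqP Ex /eqP Ey v xy.
by rewrite -(D_decodes x v) -(D_decodes y v) Ex Ey; apply: D_local.
Qed.

Lemma ic_achievable_circ_ge n k t ell : k.*2.+2 <= n ->
  ic_achievable (circ_adj n k) t ell -> t * n <= k.+1 * ell.
Proof.
move=> le_n [P [E [solE def_ell]]]; have n_gt0 : 0 < n by lia.
have A_gt0 : 0 < 2 ^ t by rewrite expn_gt0.
have [p large_p] := exists_large_fibre (fun x : {ffun 'I_n -> alph t} => E x)
  [ffun=> Ordinal A_gt0].
have small_p := decodable_card_le Rdefinitions.R n_gt0
  (ic_solution_fibre_decodable (p := p) solE) le_n.
have card_P : #|P| <= 2 ^ ell by rewrite -def_ell; apply: up_logP.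
rewrite card_ffun !card_ord in large_p small_p.
set F := #|_| in large_p small_p.
have : 2 ^ (t * n) * 2 ^ (t * n * k) <= 2 ^ (k.+1 * ell) * 2 ^ (t * n * k).
  have -> : 2 ^ (t * n) * 2 ^ (t * n * k) = ((2 ^ t) ^ n) ^ k.+1.
    by rewrite -!expnM -expnD; congr (2 ^ _); nia.
  apply: leq_trans (_ : (#|P| * F) ^ k.+1 <= _); first by rewrite leq_exp2r.
  rewrite expnMn; apply: leq_mul; first by rewrite mulnC expnM leq_exp2r.
  by rewrite -mulnA expnM.
by rewrite leq_pmul2r ?expn_gt0 // leq_exp2l.
Qed.

Lemma inf_attained (R : realType) (S : set R) a : S a -> lbound S a -> inf S = a.
Proof.
move=> Sa lbSa; apply/eqP; rewrite eq_le lb_le_inf ?andbT //; last by exists a.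
exact: (ge_inf (ex_intro _ _ lbSa)) Sa.
Qed.

Lemma beta_t_circ_ge n k t : k.*2.+2 <= n -> t * n <= k.+1 * beta_t (circ_adj n k) t.
Proof.
move=> le_n; rewrite /beta_t; case: ex_minnP => ell /asboolP achievable _.
exact: ic_achievable_circ_ge achievable.
Qed.

Lemma beta_t_circ_k n k : k.*2.+2 <= n -> beta_t (circ_adj n k) k.+1 = n.
Proof.
move=> le_n; apply/eqP; rewrite eqn_leq; apply/andP; split.
  rewrite /beta_t; case: ex_minnP => ell _ min_ell; apply/min_ell/asboolP.
  by apply: xor_code_achievable; lia.
by rewrite -(leq_pmul2l (ltn0Sn k)) beta_t_circ_ge.
Qed.

Local Open Scope ring_scope.

Theorem theorem5p3 (R : realType) (n k : nat) :
  (4 <= n)%N -> (2 * k < n - 1)%N ->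
  broadcast_rate R (circ_adj n k) = (n%:R / (k.+1)%:R)%R.
Proof.
move=> _ lt_2k_n1; have le_n : (k.*2.+2 <= n)%N by lia.
apply: inf_attained => [|_ [t t_gt0 <-]]; first by exists k.+1; rewrite ?beta_t_circ_k.
rewrite ler_pdivrMr ?ltr0n // mulrAC ler_pdivlMr ?ltr0n // -!natrM ler_nat.
by rewrite mulnC [(_ * k.+1)%N]mulnC beta_t_circ_ge.
Qed.
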